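(* Let $r\in(0,1]$, $t>0$, $a\ge0$ and $x>0$. If $S(x;r,t,a)=0$, where \[ S(x;r,t,a)=4ax^3-\{8a^2+4a(3r+2)t-t^2\}x^2+2\big[2a^3-2a^2(5r-2)t+a\{r(6r-1)+1\}t^2-(r+1)t^3\big]x+(r-1)^2t^2\{a^2-a(4r-2)t+t^2\}, \] then $\rho(x;r,t,a)=0$.
   Context: The three-parametric MP density $\rho(x;r,t,a)$ ($r\in(0,1]$, $t>0$, $a\ge0$) is the density of the weak limit, as $N,M\to\infty$ with $N/M\to r$, of $\frac1N\sum_{j}\delta_{X^N_j(t)/M}$, where $X^N_j$ solve $dX^N_j=2\sqrt{X^N_j}dB_j+2(M-N+1)dt+4X^N_j\sum_{k\neq j}\frac{dt}{X^N_j-X^N_k}$ with independent standard Brownian motions $B_j$ and $X^N_j(0)=aM$; equivalently its Stieltjes transform $G$ solves $z=\frac1G+\frac{t}{1-rtG}+\frac{a}{(1-rtG)^2}$, and $\rho(x)=-\frac1\pi\lim_{\varepsilon\to0}\Im G(x+i\varepsilon)$. *)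

From HB Require Import structures.
From mathcomp Require Import all_boot all_order all_algebra.
From mathcomp Require Import all_classical all_reals all_analysis.
From mathcomp Require Import complex.
Set Implicit Arguments. Unset Strict Implicit. Unset Printing Implicit Defensive.
Import Order.TTheory GRing.Theory Num.Theory ComplexField.
Import numFieldNormedType.Exports.
Local Open Scope classical_set_scope.
Local Open Scope ring_scope.


(** Stieltjes transform G(z) = \int dmu(y) / (z - y) of a probability measure
    mu on R, written through its real and imaginary parts
    Re 1/(z-y) = (complex.Re z - y)/|z-y|^2,  Im 1/(z-y) = - complex.Im z/|z-y|^2. *)
Definition stieltjes (R : realType) (mu : probability R R) (z : R[i]) : R[i] :=
  Complex (Rintegral mu setT (fun y : R => (complex.Re z - y) / ((complex.Re z - y) ^+ 2 + complex.Im z ^+ 2)))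
          (Rintegral mu setT (fun y : R => - complex.Im z / ((complex.Re z - y) ^+ 2 + complex.Im z ^+ 2))).

Definition is_MP_law (R : realType) (r t a : R) (mu : probability R R) : Prop :=
  forall z : R[i], 0 < complex.Im z ->
    let G := stieltjes mu z in
    z = G^-1 + (t%:C)%C / (1 - ((r * t)%:C)%C * G) + (a%:C)%C / (1 - ((r * t)%:C)%C * G) ^+ 2.

(** rho(x) = - (1/pi) lim_{eps -> 0+} Im G(x + i eps) exists and equals v. *)
Definition MP_density_is (R : realType) (mu : probability R R) (x v : R) : Prop :=
  (fun eps : R => - pi^-1 * complex.Im (stieltjes mu (Complex x eps))) @ 0^'+ --> v.

Definition S_poly (R : realType) (x r t a : R) : R :=
  4 * a * x ^+ 3
  - (8 * a ^+ 2 + 4 * a * (3 * r + 2) * t - t ^+ 2) * x ^+ 2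
  + 2 * (2 * a ^+ 3 - 2 * a ^+ 2 * (5 * r - 2) * t
         + a * (r * (6 * r - 1) + 1) * t ^+ 2 - (r + 1) * t ^+ 3) * x
  + (r - 1) ^+ 2 * t ^+ 2 * (a ^+ 2 - a * (4 * r - 2) * t + t ^+ 2).

From HB Require Import structures.
From mathcomp Require Import all_boot all_order all_algebra.
From mathcomp Require Import all_classical all_reals all_analysis.
From mathcomp Require Import complex.
From mathcomp Require Import ring lra.
Set Implicit Arguments. Unset Strict Implicit. Unset Printing Implicit Defensive.
Import Order.TTheory GRing.Theory Num.Theory ComplexField.
Import numFieldNormedType.Exports.
Local Open Scope classical_set_scope.
Local Open Scope ring_scope.

(* Write s = r t.  Clearing denominators in the MP equation at z = x + i eps
   gives c3 G^3 + c2 G^2 + c1 G - 1 = - i eps G (1 - s G)^2 for G = G(x + i eps),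
   with real coefficients c_k and a cubic discriminant equal to s^2 S(x; r, t, a).
   When S vanishes the cubic is c3 (G - al)^2 (G - be) with al, be real, and
   taking squared moduli gives
     c3^2 |G - al|^4 |G - be|^2 = eps^2 |G|^2 |1 - s G|^4.
   For small eps this keeps |G| bounded, and then
   (Im G)^6 <= |G - al|^4 |G - be|^2 = O(eps^2), so Im G(x + i eps) -> 0. *)

Definition cubic_disc (F : comNzRingType) (c3 c2 c1 c0 : F) : F :=
  18 * c3 * c2 * c1 * c0 - 4 * c2 ^+ 3 * c0 + c2 ^+ 2 * c1 ^+ 2
  - 4 * c3 * c1 ^+ 3 - 27 * c3 ^+ 2 * c0 ^+ 2.

Lemma cubic_disc_eq0_double_root (F : numFieldType) (c3 c2 c1 c0 : F) :
  c3 != 0 -> cubic_disc c3 c2 c1 c0 = 0 ->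
  exists al : F, c3 * al ^+ 3 + c2 * al ^+ 2 + c1 * al + c0 = 0
              /\ 3 * c3 * al ^+ 2 + 2 * c2 * al + c1 = 0.
Proof.
move=> c3_neq0 disc0.
have [p0|p_neq0] := eqVneq (c2 ^+ 2 - 3 * c3 * c1) 0.
- (* A triple root. *)
  have c1E : c1 = c2 ^+ 2 / (3 * c3).
    have -> : c1 = c2 ^+ 2 / (3 * c3) - (c2 ^+ 2 - 3 * c3 * c1) / (3 * c3) by field.
    by rewrite p0 mul0r subr0.
  have c0E : (27 * c3 ^+ 2 * c0 - c2 ^+ 3) ^+ 2 = 0.
    by rewrite -(mulr0 (- 27 * c3 ^+ 2)) -disc0 /cubic_disc c1E; field.
  move/eqP: c0E; rewrite sqrf_eq0 subr_eq0 => /eqP c0E.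
  exists (- c2 / (3 * c3)); split.
  + have -> : c0 = c2 ^+ 3 / (27 * c3 ^+ 2) by rewrite -c0E; field.
    by rewrite c1E; field.
  + by rewrite c1E; field.
- (* Both conditions on the double root X / (2 p) are multiples of the discriminant. *)
  set X := 9 * c3 * c0 - c2 * c1; set p := c2 ^+ 2 - 3 * c3 * c1 in p_neq0.
  have dA : 3 * c3 * X ^+ 2 + 4 * c2 * X * p + 4 * c1 * p ^+ 2 = 0.
    by rewrite -(mulr0 (-9 * c3)) -disc0 /X /p /cubic_disc; ring.
  have dB : c3 * X ^+ 3 + 2 * c2 * X ^+ 2 * p + 4 * c1 * X * p ^+ 2 + 8 * c0 * p ^+ 3 = 0.
    rewrite -(mulr0 (9 * c3 * c2 * c1 - 27 * c3 ^+ 2 * c0 - 2 * c2 ^+ 3)) -disc0.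
    by rewrite /X /p /cubic_disc; ring.
  exists (X / (2 * p)); split.
  + rewrite -(mulr0 (8 * p ^+ 3)^-1) -dB; field; exact: p_neq0.
  + rewrite -(mulr0 (4 * p ^+ 2)^-1) -dA; field; exact: p_neq0.
Qed.

Lemma cubic_disc_eq0_factor (F : numFieldType) (c3 c2 c1 c0 : F) :
  c3 != 0 -> cubic_disc c3 c2 c1 c0 = 0 ->
  exists al be : F, [/\ c2 = - c3 * (2 * al + be), c1 = c3 * (al ^+ 2 + 2 * al * be)
                     & c0 = - c3 * al ^+ 2 * be].
Proof.
move=> c3_neq0 /(cubic_disc_eq0_double_root c3_neq0) [al [root0 droot0]].
exists al, (- c2 / c3 - 2 * al); split; first by field.
- by rewrite -[c1]subr0 -droot0; field.
- by rewrite -[c0]subr0 -root0 -[c1]subr0 -droot0; field.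
Qed.

Lemma sqr_dist_ge_quarter (R : realFieldType) (u v al : R) :
  4 * al ^+ 2 <= u ^+ 2 + v ^+ 2 -> (u ^+ 2 + v ^+ 2) / 4 <= (u - al) ^+ 2 + v ^+ 2.
Proof. by move: (sqr_ge0 (u - 2 * al)) (sqr_ge0 v); nra. Qed.

Lemma sqr_one_subM_le (R : realFieldType) (s u v : R) :
  (1 - s * u) ^+ 2 + (s * v) ^+ 2 <= 2 + 2 * s ^+ 2 * (u ^+ 2 + v ^+ 2).
Proof. by move: (sqr_ge0 (1 + s * u)) (sqr_ge0 (s * v)); nra. Qed.

Section ImBound.
Variables (R : realFieldType) (c s al be eps u v : R).
Hypotheses (c_gt0 : 0 < c) (s_gt0 : 0 < s) (eps_gt0 : 0 < eps).
Hypothesis eps_small : 32 * s ^+ 2 * eps < c.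
Hypothesis cubic_sqr_norm :
  c ^+ 2 * ((u - al) ^+ 2 + v ^+ 2) ^+ 2 * ((u - be) ^+ 2 + v ^+ 2)
  = eps ^+ 2 * (u ^+ 2 + v ^+ 2) * ((1 - s * u) ^+ 2 + (s * v) ^+ 2) ^+ 2.

Let M := 4 * al ^+ 2 + 4 * be ^+ 2 + s ^-2.

(* Otherwise |G - al| and |G - be| would exceed |G| / 2 and |1 - s G| would be
   at most 2 s |G|, so the identity would force c <= 32 s^2 eps. *)
Lemma sqr_norm_le_of_small_eps : u ^+ 2 + v ^+ 2 <= M.
Proof.
set n := u ^+ 2 + v ^+ 2; rewrite leNgt; apply/negP => M_lt_n.
have sV_ge0 : 0 <= s ^-2 by rewrite invr_ge0 exprn_ge0 ?ltW.
have al_le : 4 * al ^+ 2 <= n by move: (sqr_ge0 be) M_lt_n; rewrite /M; lra.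
have be_le : 4 * be ^+ 2 <= n by move: (sqr_ge0 al) M_lt_n; rewrite /M; lra.
have sn_ge1 : 1 <= s ^+ 2 * n.
  rewrite -(divff (expf_neq0 2 (lt0r_neq0 s_gt0))) ler_pM2l ?exprn_gt0 //.
  by apply: ltW; move: (sqr_ge0 al) (sqr_ge0 be) M_lt_n; rewrite /M; lra.
have n_gt0 : 0 < n by move: (sqr_ge0 al) (sqr_ge0 be) sV_ge0 M_lt_n; rewrite /M; lra.
set q := n / 4.
have q_ge0 : 0 <= q by rewrite divr_ge0 ?ltW.
have A_ge : q <= (u - al) ^+ 2 + v ^+ 2 by exact: sqr_dist_ge_quarter.
have B_ge : q <= (u - be) ^+ 2 + v ^+ 2 by exact: sqr_dist_ge_quarter.
have L_le : (1 - s * u) ^+ 2 + (s * v) ^+ 2 <= 16 * s ^+ 2 * q.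
  by apply: (le_trans (sqr_one_subM_le s u v)); rewrite /q -/n; lra.
have : c ^+ 2 * q ^+ 3 <= (32 * s ^+ 2 * eps) ^+ 2 * q ^+ 3.
  apply: (@le_trans _ _ (c ^+ 2 * ((u - al) ^+ 2 + v ^+ 2) ^+ 2 * ((u - be) ^+ 2 + v ^+ 2))).
    rewrite -mulrA ler_wpM2l ?sqr_ge0 // exprSr ler_pM ?exprn_ge0 //.
    by rewrite lerXn2r ?nnegrE // (le_trans q_ge0).
  rewrite cubic_sqr_norm -/n (_ : n = 4 * q); last by rewrite /q; field.
  have L_ge0 : 0 <= (1 - s * u) ^+ 2 + (s * v) ^+ 2 by rewrite addr_ge0 ?sqr_ge0.
  have L2_le : ((1 - s * u) ^+ 2 + (s * v) ^+ 2) ^+ 2 <= (16 * s ^+ 2 * q) ^+ 2.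
    by rewrite lerXn2r ?nnegrE ?(le_trans L_ge0).
  apply: (le_trans (ler_wpM2l _ L2_le)).
    by apply: mulr_ge0; [exact: sqr_ge0 | exact: mulr_ge0].
  have -> : eps ^+ 2 * (4 * q) * (16 * s ^+ 2 * q) ^+ 2 = (32 * s ^+ 2 * eps) ^+ 2 * q ^+ 3.
    by ring.
  by [].
have q_gt0 : 0 < q by rewrite divr_gt0.
have k_gt0 : 0 < 32 * s ^+ 2 * eps by rewrite !mulr_gt0 ?exprn_gt0.
rewrite ler_pM2r ?exprn_gt0 //.
by move: eps_small k_gt0; set k := 32 * s ^+ 2 * eps; nra.
Qed.

Lemma Im_pow6_le_of_small_eps : v ^+ 6 <= eps ^+ 2 * (M * (2 + 2 * s ^+ 2 * M) ^+ 2 / c ^+ 2).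
Proof.
have n_le := sqr_norm_le_of_small_eps.
have n_ge0 : 0 <= u ^+ 2 + v ^+ 2 by rewrite addr_ge0 ?sqr_ge0.
have L_ge0 : 0 <= (1 - s * u) ^+ 2 + (s * v) ^+ 2 by rewrite addr_ge0 ?sqr_ge0.
have L_le : (1 - s * u) ^+ 2 + (s * v) ^+ 2 <= 2 + 2 * s ^+ 2 * M.
  apply: (le_trans (sqr_one_subM_le s u v)).
  by rewrite lerD2l ler_pM2l ?mulr_gt0 ?exprn_gt0.
have v6_le : v ^+ 6 <= ((u - al) ^+ 2 + v ^+ 2) ^+ 2 * ((u - be) ^+ 2 + v ^+ 2).
  rewrite (_ : v ^+ 6 = (v ^+ 2) ^+ 2 * v ^+ 2); last by rewrite -exprM -exprD.
  apply: ler_pM; rewrite ?sqr_ge0 ?lerDr ?sqr_ge0 //.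
  by rewrite lerXn2r ?nnegrE ?addr_ge0 ?sqr_ge0 ?lerDr ?sqr_ge0.
rewrite mulrA ler_pdivlMr ?exprn_gt0 // mulrC.
apply: (le_trans (ler_wpM2l (ltW (exprn_gt0 2 c_gt0)) v6_le)).
rewrite [leLHS]mulrA cubic_sqr_norm -mulrA ler_wpM2l ?sqr_ge0 //.
apply: ler_pM => //; first exact: exprn_ge0.
by rewrite lerXn2r ?nnegrE ?(le_trans L_ge0).
Qed.

End ImBound.

Lemma cvg_at_right0_of_pow_norm_le (R : realFieldType) (f : R -> R) (n : nat) (K : R) :
  (\forall e \near 0^'+, `|f e| ^+ n.+1 <= e * K) -> f e @[e --> 0^'+] --> 0.
Proof.
move=> fK; apply/cvgr0Pnorm_lt => d d_gt0.
have K1_gt0 : 0 < `|K| + 1 by have := normr_ge0 K; lra.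
near=> e.
have e_gt0 : 0 < e by near: e; exact: nbhs_right_gt.
have e_small : e * (`|K| + 1) < d ^+ n.+1.
  rewrite -ltr_pdivlMr //; near: e.
  by apply: nbhs_right_lt; rewrite divr_gt0 ?exprn_gt0.
have fKe : `|f e| ^+ n.+1 <= e * K by near: e; exact: fK.
rewrite -(ltr_pXn2r (ltn0Sn n)) ?nnegrE ?normr_ge0 ?ltW //; apply: (le_lt_trans fKe).
apply: le_lt_trans e_small; rewrite ler_wpM2l ?ltW //.
by have := ler_norm K; lra.
Unshelve. all: by end_near.
Qed.

Section MPCubic.
Local Open Scope complex_scope.
Variables (R : realType) (r t a x : R).
Local Notation s := (r * t).
Local Notation c3 := (x * s ^+ 2).
Local Notation c2 := (- 2 * x * s - s ^+ 2 + t * s).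
Local Notation c1 := (x + 2 * s - t - a).
Local Notation MP_rhs G := (G^-1 + t%:C / (1 - s%:C * G) + a%:C / (1 - s%:C * G) ^+ 2).

Lemma MP_cubic_disc : cubic_disc c3 c2 c1 (-1) = s ^+ 2 * S_poly x r t a.
Proof. by rewrite /cubic_disc /S_poly; ring. Qed.

Lemma MP_eq_cubic (z G : R[i]) : 0 < complex.Im z -> z = MP_rhs G ->
  c3%:C * G ^+ 3 + c2%:C * G ^+ 2 + c1%:C * G - 1 = (x%:C - z) * G * (1 - s%:C * G) ^+ 2.
Proof.
move=> Im_gt0 zE.
(* With the convention 0^-1 = 0, G = 0 or s G = 1 would make the right-hand side real. *)
have G_neq0 : G != 0.
  apply: contraTneq Im_gt0 => G0.
  by rewrite zE G0 invr0 mulr0 subr0 expr1n !divr1 add0r /= addr0 ltxx.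
have sG_neq1 : 1 - s%:C * G != 0.
  apply: contraTneq Im_gt0 => sG1.
  have GV : G^-1 = s%:C.
    by apply: (mulIf G_neq0); rewrite mulVf //; apply/eqP; rewrite -subr_eq0 sG1.
  by rewrite zE sG1 expr0n invr0 !mulr0 !addr0 GV /= ltxx.
by rewrite zE; field; rewrite -rmorphM sG_neq1 G_neq0.
Qed.

Hypotheses (r_gt0 : 0 < r) (t_gt0 : 0 < t) (x_gt0 : 0 < x) (S0 : S_poly x r t a = 0).

Lemma MP_eq_double_root : exists al be : R, forall z G : R[i],
  0 < complex.Im z -> z = MP_rhs G ->
  c3%:C * (G - al%:C) ^+ 2 * (G - be%:C) = (x%:C - z) * G * (1 - s%:C * G) ^+ 2.
Proof.
have c3_neq0 : c3 != 0 by rewrite !mulf_neq0 ?expf_neq0 ?mulf_neq0 ?lt0r_neq0.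
have disc0 : cubic_disc c3 c2 c1 (-1) = 0 by rewrite MP_cubic_disc S0 mulr0.
have [al [be [c2E c1E c0E]]] := cubic_disc_eq0_factor c3_neq0 disc0.
have c0E' : (c3 * al ^+ 2 * be)%:C = 1 :> R[i].
  by rewrite (_ : c3 * al ^+ 2 * be = 1) //; apply: oppr_inj; rewrite c0E; ring.
exists al, be => z G Im_gt0 /(MP_eq_cubic Im_gt0) <-.
by rewrite c2E c1E -[X in _ = _ - X]c0E'; ring.
Qed.

Lemma MP_eq_double_root_sqr_norm : exists al be : R, forall eps u v : R,
  0 < eps -> x +i* eps = MP_rhs (u +i* v) ->
  c3 ^+ 2 * ((u - al) ^+ 2 + v ^+ 2) ^+ 2 * ((u - be) ^+ 2 + v ^+ 2)
  = eps ^+ 2 * (u ^+ 2 + v ^+ 2) * ((1 - s * u) ^+ 2 + (s * v) ^+ 2) ^+ 2.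
Proof.
have [al [be factorE]] := MP_eq_double_root.
exists al, be => eps u v eps_gt0 /(factorE (x +i* eps) _ eps_gt0).
move=> /(congr1 (fun w => `|w| ^+ 2)) /=; rewrite !normrM -!expr2 !exprMn -!add_Re2_Im2.
by move=> /(congr1 (@complex.Re R)) /= E; apply: (etrans _ (etrans E _)); ring.
Qed.

Variable mu : probability R R.
Hypothesis mu_MP : is_MP_law r t a mu.

Lemma MP_Im_stieltjes_pow6_le : exists K : R,
  \forall eps \near 0^'+, `|complex.Im (stieltjes mu (x +i* eps))| ^+ 6 <= eps * K.
Proof.
have [al [be normE]] := MP_eq_double_root_sqr_norm.
have s_gt0 : 0 < s by rewrite mulr_gt0.
have c3_gt0 : 0 < c3 by rewrite mulr_gt0 ?exprn_gt0.
pose M := 4 * al ^+ 2 + 4 * be ^+ 2 + s ^-2.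
pose K := M * (2 + 2 * s ^+ 2 * M) ^+ 2 / c3 ^+ 2.
have K_ge0 : 0 <= K.
  have sV_ge0 : 0 <= s ^-2 by rewrite invr_ge0 exprn_ge0 // ltW.
  have M_ge0 : 0 <= M by rewrite /M; move: (sqr_ge0 al) (sqr_ge0 be); lra.
  by rewrite divr_ge0 ?sqr_ge0 // mulr_ge0 ?sqr_ge0.
exists K; near=> eps.
have eps_gt0 : 0 < eps by near: eps; exact: nbhs_right_gt.
have eps_le1 : eps <= 1 by near: eps; exact: nbhs_right_ltW ltr01.
have eps_small : 32 * s ^+ 2 * eps < c3.
  rewrite mulrC -ltr_pdivlMr ?mulr_gt0 ?exprn_gt0 //.
  by near: eps; apply: nbhs_right_lt; rewrite divr_gt0 ?mulr_gt0 ?exprn_gt0.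
set G := stieltjes mu (x +i* eps).
have := normE eps (complex.Re G) (complex.Im G) eps_gt0 (@mu_MP (x +i* eps) eps_gt0).
move=> /(Im_pow6_le_of_small_eps c3_gt0 s_gt0 eps_gt0 eps_small) Im_le.
rewrite -normrX ger0_norm ?exprn_even_ge0 //; apply: (le_trans Im_le).
by rewrite ler_wpM2r // expr2 ler_piMl ?ltW.
Unshelve. all: by end_near.
Qed.

End MPCubic.

Theorem lemma2p4 (R : realType) (r t a x : R) (mu : probability R R) :
  0 < r -> r <= 1 -> 0 < t -> 0 <= a -> 0 < x ->
  S_poly x r t a = 0 ->
  is_MP_law r t a mu ->
  MP_density_is mu x 0.
Proof.
move=> r_gt0 _ t_gt0 _ x_gt0 S0 mu_MP.
have [K ImK] := MP_Im_stieltjes_pow6_le r_gt0 t_gt0 x_gt0 S0 mu_MP.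
rewrite /MP_density_is -[X in _ --> X](mulr0 (- pi^-1)).
by apply: cvgMl_tmp; exact: cvg_at_right0_of_pow_norm_le ImK.
Qed.
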